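(* Let $A$ be a commutative algebra over a field with multiplication $\star$ satisfying the Tortken identity $$(a\star b)\star(c\star d)-(a\star d)\star(c\star b)=(a,b,c)\star d-(a,d,c)\star b\quad\text{for all }a,b,c,d\in A.$$ For $a\in A$ let $r_a:A\to A$, $b\mapsto a\star b$. Then for all $a_1,a_2,a_3\in A$, $$\sum_{\sigma\in Sym_3}\operatorname{sign}(\sigma)\, r_{a_{\sigma(1)}}r_{a_{\sigma(2)}}r_{a_{\sigma(3)}}=0.$$
   Context: The associator is $(a,b,c)=a\star(b\star c)-(a\star b)\star c$. $Sym_3$ is the symmetric group on $\{1,2,3\}$. *)

(* A (possibly non-associative) commutative algebra over a
   field K is modelled as a K-vector space V (lmodType K) with a bilinear
   multiplication [mul]. *)
From HB Require Import structures.
From mathcomp Require Import all_boot all_order all_algebra all_fingroup.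
Set Implicit Arguments. Unset Strict Implicit. Unset Printing Implicit Defensive.
Import GRing.Theory.
Local Open Scope ring_scope.

Definition assoc {V : zmodType} (mul : V -> V -> V) (a b c : V) : V :=
  mul a (mul b c) - mul (mul a b) c.

Definition rmul {V : Type} (mul : V -> V -> V) (a : V) : V -> V := fun b => mul a b.

From HB Require Import structures.
From mathcomp Require Import all_boot all_order all_algebra all_fingroup.
Set Implicit Arguments. Unset Strict Implicit. Unset Printing Implicit Defensive.
Import GRing.Theory.
Local Open Scope ring_scope.

(* With d := x, the Tortken identity and commutativity give
     r_b (r_a r_c - r_c r_a) x = (a,b,c) x + (b c)(a x) - (a b)(c x).
   Grouping the alternating sum by its first factor writes it as
   r_1 [r_2, r_3] - r_2 [r_1, r_3] + r_3 [r_1, r_2].  The product terms then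
   cancel in pairs, and the associator terms cancel because
   (b,a,c) + (a,c,b) = (a,b,c) in any commutative algebra. *)

Definition perms3 : seq 'S_3 :=
  [:: 1%g; tperm 1 2; tperm 0 1; (tperm 1%R 2%R * tperm 0%R 1%R)%g;
      (tperm 0%R 1%R * tperm 1%R 2%R)%g; tperm 0 2].

Lemma perms3_uniq : uniq perms3.
Proof.
apply: (@map_uniq _ _ (fun s : 'S_3 => (s 0, s 1))).
by rewrite /= !permM !perm1 !permE.
Qed.

Lemma mem_perms3 (s : 'S_3) : s \in perms3.
Proof.
have /subset_cardP eq_perms3 : #|perms3| = #|'S_3|.
  by rewrite (card_uniqP perms3_uniq) card_Sn.
by rewrite (eq_perms3 (subset_predT _)).
Qed.

Lemma big_S3 (V : nmodType) (F : 'S_3 -> V) :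
  \sum_(s : 'S_3) F s = \sum_(s <- perms3) F s.
Proof.
rewrite [RHS]big_uniq ?perms3_uniq //.
by apply: eq_bigl => s; rewrite mem_perms3.
Qed.

Lemma alternating_sum_S3 (R : pzRingType) (V : lmodType R)
    (f : 'I_3 -> 'I_3 -> 'I_3 -> V) :
  \sum_(s : 'S_3) ((-1) ^+ odd_perm s : R) *: f (s 0) (s 1) (s 2)
  = (f 0 1 2 - f 0 2 1) - (f 1 0 2 - f 1 2 0) + (f 2 0 1 - f 2 1 0).
Proof.
rewrite big_S3 !big_cons big_nil /=.
rewrite !odd_permM !odd_tperm odd_perm1 !permM !perm1 !permE /=.
rewrite expr0 expr1 !scale1r !scaleN1r addr0.
by rewrite opprB !addrA (addrAC _ (f 1 2 0)).
Qed.

Lemma alt_sum3D (V : zmodType) (a b c d e f : V) :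
  (a + b) - (c + d) + (e + f) = (a - c + e) + (b - d + f).
Proof. by rewrite opprD [a + b + _]addrACA [LHS]addrACA. Qed.

Section CommutativeTortkenAlgebra.

Variables (V : zmodType) (mul : V -> V -> V).
Hypothesis mulDr : forall a b c, mul a (b + c) = mul a b + mul a c.
Hypothesis mulC : forall a b, mul a b = mul b a.

Lemma starr0 a : mul a 0 = 0.
Proof. by apply: (addrI (mul a 0)); rewrite -mulDr !addr0. Qed.

Lemma star0r a : mul 0 a = 0.
Proof. by rewrite mulC starr0. Qed.

Lemma starNr a b : mul a (- b) = - mul a b.
Proof. by apply: (addrI (mul a b)); rewrite -mulDr !subrr starr0. Qed.

Lemma starBr a b c : mul a (b - c) = mul a b - mul a c.
Proof. by rewrite mulDr starNr. Qed.

Lemma starDl a b c : mul (a + b) c = mul a c + mul b c.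
Proof. by rewrite mulC mulDr !(mulC c). Qed.

Lemma starBl a b c : mul (a - b) c = mul a c - mul b c.
Proof. by rewrite mulC starBr !(mulC c). Qed.

Lemma assoc_alt_sum a b c :
  assoc mul b a c - assoc mul a b c + assoc mul a c b = 0.
Proof.
rewrite /assoc (mulC b a) (mulC c b) (mulC (mul a c) b).
by rewrite opprB !addrA subrK addrNK subrr.
Qed.

Hypothesis tortken : forall a b c d : V,
  mul (mul a b) (mul c d) - mul (mul a d) (mul c b)
  = mul (assoc mul a b c) d - mul (assoc mul a d c) b.

Lemma star_commutator a b c x :
  mul b (mul a (mul c x)) - mul b (mul c (mul a x))
  = mul (assoc mul a b c) x + (mul (mul b c) (mul a x) - mul (mul a b) (mul c x)).
Proof.
have -> : mul b (mul a (mul c x)) - mul b (mul c (mul a x)) = mul (assoc mul a x c) b.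
  by rewrite /assoc starBl !(mulC _ b) (mulC x c) (mulC (mul a x) c).
by rewrite (mulC (mul b c)) (mulC b c) -opprB tortken opprB addrC subrK.
Qed.

End CommutativeTortkenAlgebra.

Theorem mainTheorem4 (K : fieldType) (V : lmodType K) (mul : V -> V -> V)
  (mulDr : forall a b c : V, mul a (b + c) = mul a b + mul a c)
  (mulZr : forall (k : K) (a b : V), mul a (k *: b) = k *: mul a b)
  (mulC : forall a b : V, mul a b = mul b a)
  (tortken : forall a b c d : V,
      mul (mul a b) (mul c d) - mul (mul a d) (mul c b)
      = mul (assoc mul a b c) d - mul (assoc mul a d c) b)
  (a : 'I_3 -> V) (x : V) :
  \sum_(s : 'S_3) ((-1) ^+ odd_perm s : K) *:
      (rmul mul (a (s 0)) (rmul mul (a (s 1)) (rmul mul (a (s 2)) x))) = 0.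
Proof.
rewrite (alternating_sum_S3 (fun i j k => mul (a i) (mul (a j) (mul (a k) x)))).
rewrite !(star_commutator mulDr mulC tortken) alt_sum3D.
rewrite -!(starBl mulDr mulC) -(starDl mulDr mulC).
rewrite (assoc_alt_sum mulC) (star0r mulDr mulC) add0r.
rewrite (mulC (a 1) (a 0)) (mulC (a 2) (a 1)).
by rewrite opprB !addrA !subrK subrr.
Qed.
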